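(* Let $X$ be a real Hilbert space, let $\alpha\in\mathbb{R}\setminus\{0\}$ and $\beta>0$, equip $X\times X\times\mathbb{R}$ with the norm $\|(u,v,\gamma)\|=\sqrt{\|u\|^2+\|v\|^2+\beta^2|\gamma|^2}$, and let $\widetilde{C}_\alpha=\{(u,v,\gamma)\in X\times X\times\mathbb{R}: \|u\|^2-\|v\|^2=2\alpha\gamma\}$. Let $(u_0,v_0,\gamma_0)\in X\times X\times\mathbb{R}$. Then the problem of minimizing $f(u,v,\gamma)=\|u-u_0\|^2+\|v-v_0\|^2+\beta^2|\gamma-\gamma_0|^2$ subject to $\|u\|^2-\|v\|^2-2\alpha\gamma=0$ always has a solution, i.e., $P_{\widetilde{C}_\alpha}(u_0,v_0,\gamma_0)\neq\varnothing$. Moreover, if $(u,v,\gamma)\in P_{\widetilde{C}_\alpha}(u_0,v_0,\gamma_0)$, then $u,u_0$ are conically dependent and $v,v_0$ are conically dependent.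
   Context: $P_S(z)=\operatorname{argmin}_{w\in S}\|w-z\|$ with respect to the weighted norm above. Two vectors $x,x_0\in X$ are conically dependent if there exists $s\geq0$ such that $x=sx_0$ or $x_0=sx$. *)

From HB Require Import structures.
From mathcomp Require Import all_boot all_order all_algebra.
From mathcomp Require Import all_classical all_reals all_analysis.
Set Implicit Arguments. Unset Strict Implicit. Unset Printing Implicit Defensive.
Import Order.TTheory GRing.Theory Num.Theory.
Import numFieldNormedType.Exports.
Local Open Scope classical_set_scope.
Local Open Scope ring_scope.

(* A real Hilbert space is a complete normed space X (over the reals R) whose
   norm is induced by an inner product ip: ip is symmetric, linear in its
   first argument, and ip x x = `|x|^2. *)
Definition is_inner_product (R : realType) (X : normedModType R)
  (ip : X -> X -> R) : Prop :=
  (forall x y, ip x y = ip y x) /\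
  (forall (a : R) (x y z : X), ip (a *: x + y) z = a * ip x z + ip y z) /\
  (forall x, ip x x = `|x| ^+ 2).

Definition wnorm (R : realType) (X : normedModType R) (beta : R)
  (w : X * X * R) : R :=
  Num.sqrt (`|w.1.1| ^+ 2 + `|w.1.2| ^+ 2 + beta ^+ 2 * `|w.2| ^+ 2).

Definition wdist (R : realType) (X : normedModType R) (beta : R)
  (w z : X * X * R) : R :=
  wnorm beta (w.1.1 - z.1.1, w.1.2 - z.1.2, w.2 - z.2).

Definition Ctilde (R : realType) (X : normedModType R) (alpha : R) :
  set (X * X * R) :=
  [set w | `|w.1.1| ^+ 2 - `|w.1.2| ^+ 2 = 2 * alpha * w.2].

Definition metric_proj (R : realType) (X : normedModType R) (beta : R)
  (S : set (X * X * R)) (z : X * X * R) : set (X * X * R) :=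
  [set w | S w /\ forall w', S w' -> wdist beta w z <= wdist beta w' z].

Definition conically_dependent (R : realType) (X : normedModType R)
  (x x0 : X) : Prop :=
  exists s : R, 0 <= s /\ (x = s *: x0 \/ x0 = s *: x).
Arguments Ctilde {R} X alpha.

From HB Require Import structures.
From mathcomp Require Import all_boot all_order all_algebra.
From mathcomp Require Import all_classical all_reals all_analysis.
From mathcomp Require Import lra.
Set Implicit Arguments. Unset Strict Implicit. Unset Printing Implicit Defensive.
Import Order.TTheory GRing.Theory Num.Theory.
Import numFieldNormedType.Exports.
Local Open Scope classical_set_scope.
Local Open Scope ring_scope.

(* On the constraint set, gamma is a function of (|u|, |v|), and among the
   vectors of a given norm the one closest to u0 is the one pointing along u0.
   Projecting therefore reduces to minimising a continuous coercive function
   of (a, b) = (|u|, |v|) over the closed quadrant, which has a minimiser by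
   compactness; lifting it along the directions of u0 and v0 gives a point of
   the projection.  Conversely, at a projection u minimises |u - u0| on its
   sphere; comparing with the vector of the same norm along u0 yields
   <u, u0> >= |u| |u0|, the equality case of Cauchy-Schwarz, so u and u0 are
   conically dependent (and likewise for v, v0). *)

Lemma exists_unit_along (R : realType) (X : normedModType R) (e x0 : X) :
  e != 0 ->
  exists2 d : X, `|d| = 1 & forall a, 0 <= a -> `|a *: d - x0| = `|a - `|x0| |.
Proof.
move=> e_neq0.
have normalized_unit (y : X) : y != 0 -> `| `|y|^-1 *: y| = 1.
  by move=> y_neq0; rewrite normrZ normfV normr_id mulVf // normr_eq0.
have [-> | x0_neq0] := eqVneq x0 0.
  exists (`|e|^-1 *: e) => [|a a_ge0]; first exact: normalized_unit.
  by rewrite normr0 !subr0 normrZ normalized_unit // mulr1 ger0_norm.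
exists (`|x0|^-1 *: x0) => [|a _]; first exact: normalized_unit.
have -> : a *: (`|x0|^-1 *: x0) - x0 = (a / `|x0| - 1) *: x0.
  by rewrite scalerBl scale1r scalerA.
rewrite normrZ -[X in _ * X = _](normr_id x0) -normrM mulrBl mul1r.
by rewrite mulfVK // normr_eq0.
Qed.

Lemma ler_sqr_dist_dist (R : numDomainType) (V : normedZmodType R) (u u0 : V) :
  (`|u| - `|u0|) ^+ 2 <= `|u - u0| ^+ 2.
Proof.
rewrite -real_normK ?num_real // ler_sqr ?nnegrE ?normr_ge0 //.
exact: ler_dist_dist.
Qed.

Section InnerProduct.
Variables (R : realType) (X : normedModType R) (ip : X -> X -> R).
Hypothesis ip_inner : is_inner_product ip.

Let ipC x y : ip x y = ip y x. Proof. by case: ip_inner. Qed.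

Let ip_normK x : ip x x = `|x| ^+ 2. Proof. by case: ip_inner => _ []. Qed.

Let ip_linear a x y z : ip (a *: x + y) z = a * ip x z + ip y z.
Proof. by case: ip_inner => _ []. Qed.

Lemma ipZl a x z : ip (a *: x) z = a * ip x z.
Proof.
have ip0l : ip 0 z = 0.
  by have := ip_linear 1 0 0 z; rewrite scale1r addr0 mul1r; lra.
by rewrite -[a *: x]addr0 ip_linear ip0l addr0.
Qed.

Lemma ipBl x y z : ip (x - y) z = ip x z - ip y z.
Proof. by rewrite addrC -scaleN1r ip_linear mulN1r addrC. Qed.

Lemma ipZr a x z : ip z (a *: x) = a * ip z x.
Proof. by rewrite ipC ipZl ipC. Qed.

Lemma ipBr x y z : ip z (x - y) = ip z x - ip z y.
Proof. by rewrite ipC ipBl !(ipC z). Qed.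

Lemma sqr_normB x y : `|x - y| ^+ 2 = `|x| ^+ 2 - 2 * ip x y + `|y| ^+ 2.
Proof. by rewrite -!ip_normK ipBl !ipBr (ipC y x); lra. Qed.

Lemma conically_dependent_of_normM_le x x0 :
  `|x| * `|x0| <= ip x x0 -> conically_dependent x x0.
Proof.
move=> normM_le.
have [-> | x0_neq0] := eqVneq x0 0.
  by exists 0; split=> //; right; rewrite scale0r.
set a := `|x| in normM_le *; set p := `|x0| in normM_le *.
have p_gt0 : 0 < p by rewrite normr_gt0.
have a_ge0 : 0 <= a by exact: normr_ge0.
have : `|p *: x - a *: x0| ^+ 2 <= 0.
  rewrite sqr_normB ipZl ipZr !normrZ !ger0_norm ?normr_ge0 // -/a -/p.
  have : 0 <= p * a * (ip x x0 - a * p) by rewrite !mulr_ge0 ?subr_ge0 // ltW.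
  nra.
rewrite le_eqVlt ltNge sqr_ge0 orbF sqrf_eq0 normr_eq0 subr_eq0 => /eqP scaled_eq.
exists (a / p); split; first by rewrite divr_ge0 // ltW.
by left; rewrite -[x](scalerK (lt0r_neq0 p_gt0)) scaled_eq scalerA mulrC.
Qed.

Lemma conically_dependent_of_sphere_argmin (x x0 : X) :
  (forall y, `|y| = `|x| -> `|x - x0| ^+ 2 <= `|y - x0| ^+ 2) ->
  conically_dependent x x0.
Proof.
move=> x_argmin; apply: conically_dependent_of_normM_le.
have [-> | x0_neq0] := eqVneq x0 0.
  by rewrite normr0 mulr0 -(scale0r (0 : X)) ipZr mul0r.
have [d d_unit d_along] := exists_unit_along x0 x0_neq0.
have := x_argmin (`|x| *: d); rewrite normrZ d_unit mulr1 normr_id => /(_ erefl).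
rewrite d_along ?normr_ge0 // real_normK ?num_real // sqr_normB.
nra.
Qed.

End InnerProduct.

Lemma continuous_quadrant_argmin (R : realType) (G : R * R -> R) (M : R) :
  continuous G ->
  (forall z, 0 <= z.1 -> 0 <= z.2 -> G z <= G (0, 0) -> z.1 <= M /\ z.2 <= M) ->
  exists2 z, 0 <= z.1 /\ 0 <= z.2 &
    forall w, 0 <= w.1 -> 0 <= w.2 -> G z <= G w.
Proof.
move=> G_cont G_coercive.
have [_ M_ge0] := G_coercive (0, 0) (lexx _) (lexx _) (lexx _).
pose K := `[0, M] `*` `[0, M].
have inK w : 0 <= w.1 -> 0 <= w.2 -> w.1 <= M -> w.2 <= M -> w \in K.
  by move=> *; apply/mem_set; split; rewrite /= in_itv /=; apply/andP.
have K00 : (0, 0) \in K by apply: inK.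
have K_compact : compact K by apply: compact_setX; exact: segment_compact.
have [z /set_mem [zK1 zK2] z_min] :=
  compact_EVT_min (ex_intro K _ (set_mem K00)) K_compact
    (continuous_subspaceT G_cont).
move: zK1 zK2; rewrite /= !in_itv /= => /andP [z1_ge0 _] /andP [z2_ge0 _].
exists z => // w w1_ge0 w2_ge0.
have [w_le | w_gt] := lerP (G w) (G (0, 0)).
  by have [w1_le w2_le] := G_coercive w w1_ge0 w2_ge0 w_le; apply/z_min/inK.
exact: le_trans (z_min _ K00) (ltW w_gt).
Qed.

Section ReducedProblem.
Variables (R : realType) (alpha beta p q g0 : R).

Definition reduced_obj (a b : R) : R :=
  (a - p) ^+ 2 + (b - q) ^+ 2 +
  beta ^+ 2 * ((a ^+ 2 - b ^+ 2) / (2 * alpha) - g0) ^+ 2.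

Lemma continuous_reduced_obj :
  continuous (fun z : R * R => reduced_obj z.1 z.2).
Proof.
have sqr_cont (f : R * R -> R) z :
    {for z, continuous f} -> {for z, continuous (fun w => f w ^+ 2)}.
  move=> f_cont; exact: (@continuous_comp _ _ _ f (fun x : R => x ^+ 2) z f_cont
                          (@exprn_continuous R 2 (f z))).
move=> z; rewrite /reduced_obj.
apply: cvgD; first apply: cvgD.
- by apply: (sqr_cont); apply: cvgB; [exact: cvg_fst | exact: cvg_cst].
- by apply: (sqr_cont); apply: cvgB; [exact: cvg_snd | exact: cvg_cst].
apply: cvgM; first exact: cvg_cst.
apply: (sqr_cont); apply: cvgB; last exact: cvg_cst.
apply: cvgM; last exact: cvg_cst.
by apply: cvgB; apply: (sqr_cont); [exact: cvg_fst | exact: cvg_snd].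
Qed.

Lemma reduced_obj_argmin :
  exists2 z : R * R, 0 <= z.1 /\ 0 <= z.2 &
    forall a b, 0 <= a -> 0 <= b -> reduced_obj z.1 z.2 <= reduced_obj a b.
Proof.
set c := reduced_obj 0 0.
have sqr_le_obj a b : (a - p) ^+ 2 <= reduced_obj a b /\
                      (b - q) ^+ 2 <= reduced_obj a b.
  have := sqr_ge0 (a - p); have := sqr_ge0 (b - q).
  have := mulr_ge0 (sqr_ge0 beta) (sqr_ge0 ((a ^+ 2 - b ^+ 2) / (2 * alpha) - g0)).
  rewrite /reduced_obj; lra.
have le_add1 x : x ^+ 2 <= c -> x <= c + 1.
  move=> x2_le; have := sqr_ge0 x; have [|x_gt1] := lerP x 1; first lra.
  have : 0 <= (x - 1) * x by apply: mulr_ge0; lra.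
  lra.
have coercive (z : R * R) : 0 <= z.1 -> 0 <= z.2 -> reduced_obj z.1 z.2 <= c ->
    z.1 <= `|p| + `|q| + c + 1 /\ z.2 <= `|p| + `|q| + c + 1.
  move=> _ _ z_le; have [zp_le zq_le] := sqr_le_obj z.1 z.2.
  have := le_add1 _ (le_trans zp_le z_le); have := le_add1 _ (le_trans zq_le z_le).
  have := ler_norm p; have := ler_norm q; have := normr_ge0 p; have := normr_ge0 q.
  lra.
have [z z_ge0 z_min] := continuous_quadrant_argmin continuous_reduced_obj coercive.
by exists z => // a b; exact: (z_min (a, b)).
Qed.

End ReducedProblem.

Section Projection.
Variables (R : realType) (X : normedModType R) (alpha beta : R) (u0 v0 : X) (g0 : R).

Definition proj_obj (u v : X) (g : R) : R :=
  `|u - u0| ^+ 2 + `|v - v0| ^+ 2 + beta ^+ 2 * (g - g0) ^+ 2.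

Lemma ler_wdist u v g u' v' g' :
  (wdist beta (u, v, g) (u0, v0, g0) <= wdist beta (u', v', g') (u0, v0, g0)) =
  (proj_obj u v g <= proj_obj u' v' g').
Proof.
rewrite /wdist /wnorm /proj_obj /= !real_normK ?num_real // ler_sqrt //.
by apply: addr_ge0; [apply: addr_ge0 | apply: mulr_ge0]; exact: sqr_ge0.
Qed.

Lemma metric_proj_Ctilde_conic (ip : X -> X -> R) u v g :
  is_inner_product ip ->
  metric_proj beta (Ctilde X alpha) (u0, v0, g0) (u, v, g) ->
  conically_dependent u u0 /\ conically_dependent v v0.
Proof.
move=> ip_inner [Cw w_min]; rewrite /Ctilde /= in Cw.
split; apply: (conically_dependent_of_sphere_argmin ip_inner) => y y_norm.
- have /w_min : Ctilde X alpha (y, v, g) by rewrite /Ctilde /= y_norm.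
  by rewrite ler_wdist /proj_obj; lra.
- have /w_min : Ctilde X alpha (u, y, g) by rewrite /Ctilde /= y_norm.
  by rewrite ler_wdist /proj_obj; lra.
Qed.

Hypothesis alpha_neq0 : alpha != 0.

Lemma CtildeP u v g :
  Ctilde X alpha (u, v, g) <-> g = (`|u| ^+ 2 - `|v| ^+ 2) / (2 * alpha).
Proof.
have two_alpha_neq0 : 2 * alpha != 0 by rewrite mulf_neq0 ?pnatr_eq0.
rewrite /Ctilde /=; split=> [-> | ->]; first by rewrite mulrC mulKf.
by rewrite mulrC divfK.
Qed.

Lemma reduced_obj_le_proj_obj u v g :
  Ctilde X alpha (u, v, g) ->
  reduced_obj alpha beta `|u0| `|v0| g0 `|u| `|v| <= proj_obj u v g.
Proof.
move=> /CtildeP ->; rewrite /reduced_obj /proj_obj.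
have := ler_sqr_dist_dist u u0; have := ler_sqr_dist_dist v v0; lra.
Qed.

Lemma metric_proj_Ctilde_neq0 :
  metric_proj beta (Ctilde X alpha) (u0, v0, g0) !=set0.
Proof.
have [[e e_neq0] | X_trivial] := pselect (exists e : X, e != 0); last first.
  have eq0 (x : X) : x = 0 by apply: contra_notP X_trivial => /eqP; exists x.
  exists (0, 0, 0); split=> [|[[u v] g] /CtildeP g_eq].
    by apply/CtildeP; rewrite subrr mul0r.
  by rewrite g_eq (eq0 u) (eq0 v) subrr mul0r.
have [du du_unit du_along] := exists_unit_along u0 e_neq0.
have [dv dv_unit dv_along] := exists_unit_along v0 e_neq0.
have [[a b] /= [a_ge0 b_ge0] ab_min] := reduced_obj_argmin alpha beta `|u0| `|v0| g0.
exists (a *: du, b *: dv, (a ^+ 2 - b ^+ 2) / (2 * alpha)); split.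
  by apply/CtildeP; rewrite !normrZ du_unit dv_unit !mulr1 !ger0_norm.
move=> [[u v] g] Cw; rewrite ler_wdist.
have -> : proj_obj (a *: du) (b *: dv) ((a ^+ 2 - b ^+ 2) / (2 * alpha)) =
          reduced_obj alpha beta `|u0| `|v0| g0 a b.
  by rewrite /proj_obj du_along // dv_along // !real_normK ?num_real.
exact: le_trans (ab_min _ _ (normr_ge0 u) (normr_ge0 v)) (reduced_obj_le_proj_obj Cw).
Qed.

End Projection.

Theorem mainTheorem3 (R : realType) (X : completeNormedModType R)
  (ip : X -> X -> R) (alpha beta : R) (u0 v0 : X) (gamma0 : R) :
  is_inner_product ip -> alpha != 0 -> 0 < beta ->
  metric_proj beta (Ctilde X alpha) (u0, v0, gamma0) !=set0 /\
  (forall (u v : X) (gamma : R),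
     metric_proj beta (Ctilde X alpha) (u0, v0, gamma0) (u, v, gamma) ->
     conically_dependent u u0 /\ conically_dependent v v0).
Proof.
move=> ip_inner alpha_neq0 _.
split; first exact: metric_proj_Ctilde_neq0.
move=> u v gamma; exact: metric_proj_Ctilde_conic ip_inner.
Qed.
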